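(* Let $a,b,c,d$ be positive integers. Then for every positive integer $t$, $$i((a,b,c,d),t)=i((d,c,b,a),t)=\sum_{j=0}^{t\min\{a,d\}}F(a,b,j,t)\,F(c,d,-j,t).$$
   Context: For $S,T\subseteq[n]$, write $T\le S$ if $|T|=|S|$ and the $i$-th smallest element of $T$ is at most the $i$-th smallest element of $S$ for each $i$. The Schubert matroid $\mathrm{SM}_n(S)$ is the matroid on $[n]$ with bases $\{T\subseteq[n]:T\le S\}$; $i(M,t)$ is the number of lattice points in the $t$-th dilate of the matroid polytope $\mathrm{conv}\{\sum_{b\in B}e_b: B\text{ a basis of }M\}$. For a sequence $r=(r_1,\dots,r_{2m})$ of integers with $r_1\ge0$, $r_i>0$ for $i\ge2$, let $n=\sum r_i$ and let $S\subseteq[n]$ have indicator vector $(0^{r_1},1^{r_2},\dots,0^{r_{2m-1}},1^{r_{2m}})$ ($x^p$ = $p$ consecutive copies of $x$); $i(r,t):=i(\mathrm{SM}_n(S),t)$. For integers $a,b\ge0$ with $a+b\ge1$, $c\in\mathbb Z$, $t\ge0$: $F(a,b,c,t)=\sum_{j=0}^{a+b}(-1)^j\binom{a+b}{j}\binom{(t+1)(b-j)+a+c-1}{a+b-1}$, with $\binom00=1$ and $\binom NK=0$ if $K<0$ or $N<K$. *)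

From HB Require Import structures.
From mathcomp Require Import all_boot all_order all_algebra.
From mathcomp Require Import boolp reals.
Set Implicit Arguments. Unset Strict Implicit. Unset Printing Implicit Defensive.
Import Order.TTheory GRing.Theory Num.Theory.
Local Open Scope ring_scope.

Definition sorted_elems (n : nat) (T : {set 'I_n}) : seq nat :=
  sort leq [seq val x | x <- enum T].

Definition gale_le (n : nat) (T S : {set 'I_n}) : bool :=
  (#|T| == #|S|)%N &&
  [forall i : 'I_#|S|, (nth 0%N (sorted_elems T) i <= nth 0%N (sorted_elems S) i)%N].

Definition schubert_basis (n : nat) (S B : {set 'I_n}) : bool := gale_le B S.

Definition in_dilated_schubert_polytope (R : realType) (n : nat)
    (S : {set 'I_n}) (t : nat) (x : 'I_n -> int) : Prop :=
  exists lam : {set 'I_n} -> R,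
    (forall B, schubert_basis S B -> 0 <= lam B)%R /\
    (\sum_(B | schubert_basis S B) lam B = 1)%R /\
    (forall k : 'I_n,
       ((x k)%:~R = t%:R * \sum_(B | schubert_basis S B) lam B * (k \in B)%:R)%R).

(* Every such
   point has coordinates in {0,...,t} (it is t times a convex combination of
   0/1-vectors), so we count over the box {0,...,t}^n. *)
Definition i_schubert (R : realType) (n : nat) (S : {set 'I_n}) (t : nat) : nat :=
  #|[set x : {ffun 'I_n -> 'I_t.+1} |
      `[< in_dilated_schubert_polytope R S t (fun k => Posz (val (x k))) >] ]|.

(* Indicator vector (0^{r_1}, 1^{r_2}, 0^{r_3}, ...) of the sequence r. *)
Definition indicator_of (r : seq nat) : seq bool :=
  flatten [seq nseq (nth 0%N r i) (odd i) | i <- iota 0 (size r)].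

Definition set_of_seq (r : seq nat) : {set 'I_(sumn r)} :=
  [set k : 'I_(sumn r) | nth false (indicator_of r) k].

Definition i_seq (R : realType) (r : seq nat) (t : nat) : nat :=
  i_schubert R (set_of_seq r) t.

Definition binz (N : int) (K : nat) : int :=
  if (N < K%:Z)%R then 0%R else ('C(`|N|%N, K))%:Z.

Definition Ffun (a b : nat) (c : int) (t : nat) : int :=
  (\sum_(0 <= j < (a + b).+1)
     (-1) ^+ j * ('C(a + b, j))%:Z *
     binz ((t.+1)%:Z * (b%:Z - j%:Z) + a%:Z + c - 1) (a + b).-1)%R.

From HB Require Import structures.
From mathcomp Require Import all_boot all_order all_algebra.
From mathcomp Require Import boolp reals.
From mathcomp Require Import zify ring.
Set Implicit Arguments. Unset Strict Implicit. Unset Printing Implicit Defensive.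
Import Order.TTheory GRing.Theory Num.Theory.

(* Write s_m(x) for the sum of the first m coordinates of x and c_m(B) for
   |B ∩ [0, m)|.  The Gale order reads B <= S iff |B| = |S| and c_m(B) >= c_m(S)
   for all m, so a point x of {0..t}^n lies in t·P(SM_n(S)) iff s_n(x) = t|S|
   and s_m(x) >= t c_m(S) for all m; conversely such an x is the sum of the t
   bases B_i = {k | [s_k(x), s_(k+1)(x)) contains some p = i mod t}.
   For S = (0^a, 1^b, 0^c, 1^d) the conditions say s_(a+b)(x) >= tb and
   s_n(x) = t(b+d), so with j = s_(a+b)(x) - tb the count is
   sum_j G_(a+b)(tb + j) G_(c+d)(td - j), where G_m(N) is the coefficient of X^N
   in (1 + X + ... + X^t)^m.  Inclusion-exclusion gives G_(a+b)(tb + c) =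
   F(a, b, c, t), and the palindromy G_m(N) = G_m(tm - N) exchanges the sums for
   (a,b,c,d) and (d,c,b,a). *)

Lemma count_ltn_all_geq (l : seq nat) x m : (m <= x)%N -> all (leq x) l ->
  count (fun y => y < m)%N l = 0%N.
Proof.
move=> le_mx /allP geq_x; apply/eqP; rewrite -leqn0 leqNgt -has_count.
by apply/hasPn => y l_y; rewrite -leqNgt (leq_trans le_mx) // geq_x.
Qed.

Lemma sorted_nth_ltn (l : seq nat) (q m : nat) :
  sorted leq l -> (q < size l)%N ->
  (nth 0%N l q < m)%N = (q < count (fun y => y < m)%N l)%N.
Proof.
elim: l q => [|x l IHl] q //= sorted_xl lt_q_l.
have geq_x : all (leq x) l by apply: order_path_min => //; exact: leq_trans.
case: q lt_q_l => [|q] lt_q_l /=.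
  by case: (ltnP x m) => // le_mx; rewrite add0n (count_ltn_all_geq le_mx geq_x).
rewrite IHl //; last exact: path_sorted sorted_xl.
by case: (ltnP x m) => // le_mx; rewrite add0n (count_ltn_all_geq le_mx geq_x).
Qed.

Definition prefix_sum (n : nat) (F : 'I_n -> nat) (m : nat) : nat :=
  (\sum_(k : 'I_n | (k < m)%N) F k)%N.

Definition prefix_card (n : nat) (B : {set 'I_n}) (m : nat) : nat :=
  prefix_sum (fun k => nat_of_bool (k \in B)) m.

Section PrefixSum.
Variables (n : nat) (F : 'I_n -> nat).

Lemma prefix_sum0 : prefix_sum F 0 = 0%N.
Proof. by rewrite /prefix_sum big_pred0. Qed.

Lemma prefix_sumS (k : 'I_n) : prefix_sum F k.+1 = (prefix_sum F k + F k)%N.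
Proof.
rewrite /prefix_sum (bigD1 k) //= addnC; congr (_ + _)%N.
by apply: eq_bigl => i; rewrite ltnS -val_eqE; case: ltngtP.
Qed.

Lemma prefix_sum_total m : (n <= m)%N -> prefix_sum F m = (\sum_k F k)%N.
Proof. by move=> le_nm; apply: eq_bigl => k; rewrite (leq_trans (ltn_ord k)). Qed.

Lemma prefix_sumS_geq m : (n <= m)%N -> prefix_sum F m.+1 = prefix_sum F m.
Proof. by move=> le_nm; rewrite !prefix_sum_total // (leq_trans le_nm). Qed.

Lemma prefix_sumS_cases m : prefix_sum F m.+1 = prefix_sum F m \/
  exists k : 'I_n, prefix_sum F m.+1 = (prefix_sum F m + F k)%N.
Proof.
case: (ltnP m n) => [lt_mn | le_nm].
  by right; exists (Ordinal lt_mn); rewrite (prefix_sumS (Ordinal lt_mn)).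
by left; rewrite prefix_sumS_geq.
Qed.

Lemma leq_prefix_sum m m' : (m <= m')%N -> (prefix_sum F m <= prefix_sum F m')%N.
Proof.
move/subnK <-; elim: (m' - m)%N => [|i IHi] //.
rewrite addSn; case: (prefix_sumS_cases (i + m)) => [->|[k ->]] //.
by rewrite (leq_trans IHi) // leq_addr.
Qed.

Lemma prefix_sum_lipschitz t m m' : (forall k, F k <= t)%N ->
  (prefix_sum F m' <= prefix_sum F m + t * (m' - m))%N.
Proof.
move=> F_le_t; case: (leqP m' m) => [le_m'm | /ltnW].
  by rewrite (leq_trans (leq_prefix_sum le_m'm)) ?leq_addr.
move/subnK <-; rewrite addnK; elim: (m' - m)%N => [|i IHi].
  by rewrite muln0 addn0.
rewrite addSn mulnS; case: (prefix_sumS_cases (i + m)) => [->|[k ->]].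
  lia.
by have := F_le_t k; lia.
Qed.

End PrefixSum.

Lemma prefix_card_total n (B : {set 'I_n}) m : (n <= m)%N -> prefix_card B m = #|B|.
Proof.
move=> le_nm; rewrite /prefix_card prefix_sum_total // -sum1_card [RHS]big_mkcond.
by apply: eq_bigr => k _; case: (k \in B).
Qed.

Lemma count_ltn_sorted_elems n (B : {set 'I_n}) m :
  count (fun y => y < m)%N (sorted_elems B) = prefix_card B m.
Proof.
rewrite /sorted_elems (permP (permEl (perm_sort _ _))) count_map -sum1_count.
rewrite big_enum_cond /prefix_card /prefix_sum big_mkcond [RHS]big_mkcond /=.
by apply: eq_bigr => k _; case: (k \in B); case: (k < m)%N.
Qed.

Lemma gale_le_prefix_card n (B S : {set 'I_n}) :
  gale_le B S <-> #|B| = #|S| /\ forall m, (prefix_card S m <= prefix_card B m)%N.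
Proof.
have sortedB : sorted leq (sorted_elems B) := sort_sorted leq_total _.
have sortedS : sorted leq (sorted_elems S) := sort_sorted leq_total _.
have size_elems (C : {set 'I_n}) : size (sorted_elems C) = #|C|.
  by rewrite size_sort size_map cardE.
split.
  case/andP => /eqP cardBS /forallP nth_le; split => // m.
  case cSm: (prefix_card S m) => [|q] //.
  have lt_q_S : (q < count (fun y => y < m)%N (sorted_elems S))%N.
    by rewrite count_ltn_sorted_elems cSm.
  have lt_q_cS : (q < #|S|)%N.
    by rewrite -size_elems (leq_trans lt_q_S) // count_size.
  rewrite -(sorted_nth_ltn _ sortedS) ?size_elems // in lt_q_S.
  have := leq_ltn_trans (nth_le (Ordinal lt_q_cS)) lt_q_S.
  by rewrite (sorted_nth_ltn _ sortedB) ?size_elems ?cardBS // count_ltn_sorted_elems.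
case=> cardBS prefix_le; rewrite /gale_le cardBS eqxx; apply/forallP => i.
set s := nth 0%N (sorted_elems S) i.
have := prefix_le s.+1; rewrite -!count_ltn_sorted_elems.
have : (i < count (fun y => y < s.+1)%N (sorted_elems S))%N.
  by rewrite -sorted_nth_ltn ?size_elems.
have lt_iB : (i < size (sorted_elems B))%N by rewrite size_elems cardBS.
by move=> /leq_trans le_i /le_i; rewrite -sorted_nth_ltn.
Qed.

Section PolytopeNecessary.
Local Open Scope ring_scope.
Variables (R : realType) (n t : nat) (S : {set 'I_n}) (f : 'I_n -> nat).

Lemma dilated_schubert_prefix_sum :
  in_dilated_schubert_polytope R S t (fun k => Posz (f k)) ->
  prefix_sum f n = (t * #|S|)%N /\
  forall m, (t * prefix_card S m <= prefix_sum f m)%N.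
Proof.
case=> lam [lam_ge0 [lam_sum1 f_conv]].
have prefix_conv m : (prefix_sum f m)%:R =
    t%:R * \sum_(B | schubert_basis S B) lam B * (prefix_card B m)%:R :> R.
  rewrite /prefix_sum natr_sum.
  under eq_bigr => k _ do rewrite pmulrn f_conv.
  rewrite -mulr_sumr exchange_big; congr (_ * _); apply: eq_bigr => B _.
  by rewrite -mulr_sumr /prefix_card /prefix_sum natr_sum.
have conv_const (v : nat) :
    v%:R = \sum_(B | schubert_basis S B) lam B * v%:R :> R.
  by rewrite -mulr_suml lam_sum1 mul1r.
split.
  apply/eqP; rewrite -(eqr_nat R) prefix_conv natrM (conv_const #|S|).
  apply/eqP; congr (_ * _); apply: eq_bigr => B /gale_le_prefix_card[cardBS _].
  by rewrite prefix_card_total ?cardBS.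
move=> m; rewrite -(ler_nat R) prefix_conv natrM ler_wpM2l //.
rewrite (conv_const (prefix_card S m)).
apply: ler_sum => B basisB; rewrite ler_wpM2l ?lam_ge0 // ler_nat.
by case/gale_le_prefix_card: basisB.
Qed.

End PolytopeNecessary.

Section Residues.
Variable t : nat.
Hypothesis t_gt0 : (0 < t)%N.

Definition count_res (s : seq nat) (i : nat) := count (fun p => p %% t == i)%N s.

Lemma count_res_cat s1 s2 i : count_res (s1 ++ s2) i = (count_res s1 i + count_res s2 i)%N.
Proof. exact: count_cat. Qed.

Lemma count_res_period s i : (i < t)%N -> count_res (iota s t) i = 1%N.
Proof.
rewrite /count_res => lt_it; elim: s => [|s IHs].
  rewrite (@eq_in_count _ _ (pred1 i)); last first.
    by move=> p; rewrite mem_iota add0n => /andP[_ lt_pt] /=; rewrite modn_small.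
  by rewrite (count_uniq_mem _ (iota_uniq 0 t)) mem_iota lt_it.
case: t t_gt0 lt_it IHs => [|t'] // _ lt_it.
have -> : iota s.+1 t'.+1 = iota s.+1 t' ++ [:: s.+1 + t']%N.
  by rewrite -(iotaD s.+1 t' 1) addn1.
rewrite count_cat /= => <-.
by rewrite addn0 addSn -addnS modnDr addnC.
Qed.

Lemma count_res_short s len i : (i < t)%N -> (len <= t)%N ->
  (count_res (iota s len) i <= 1)%N.
Proof.
move=> lt_it le_len; rewrite -(count_res_period s lt_it) -(subnKC le_len) iotaD.
by rewrite count_res_cat leq_addr.
Qed.

Lemma count_res_iota_mul q i : (i < t)%N -> count_res (iota 0 (t * q)) i = q.
Proof.
move=> lt_it; elim: q => [|q IHq]; first by rewrite muln0.
by rewrite mulnS addnC iotaD count_res_cat IHq add0n count_res_period // addn1.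
Qed.

Lemma sum_count_res (s : seq nat) : (\sum_(i < t) count_res s i)%N = size s.
Proof.
elim: s => [|p s IHs] /=; first by rewrite big1.
rewrite big_split /= IHs -add1n; congr (_ + _)%N.
rewrite (bigD1 (Ordinal (ltn_pmod p t_gt0))) //= eqxx big1 // => j.
by rewrite -val_eqE /= eq_sym => /negbTE ->.
Qed.

End Residues.

Lemma sum_indicator_mul (T : finType) (R : pzSemiRingType) (P : pred T) y (G : T -> R) :
  P y -> (\sum_(x | P x) (x == y)%:R * G x)%R = G y.
Proof.
move=> Py; rewrite (bigD1 y) //= eqxx mul1r big1 ?addr0 // => x /andP[_ /negbTE->].
by rewrite mul0r.
Qed.

Section PolytopeSufficient.
Variables (n t : nat) (S : {set 'I_n}) (f : 'I_n -> nat).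
Hypothesis t_gt0 : (0 < t)%N.
Hypothesis f_le_t : forall k, (f k <= t)%N.
Hypothesis prefix_sum_n : prefix_sum f n = (t * #|S|)%N.
Hypothesis prefix_sum_geq : forall m, (t * prefix_card S m <= prefix_sum f m)%N.

(* Lay the coordinates f k end to end as consecutive blocks of integers;
   B_i collects the k whose block contains a p = i mod t (at most one,
   since f k <= t). *)
Definition residue_basis (i : nat) : {set 'I_n} :=
  [set k : 'I_n | has (fun p => p %% t == i)%N (iota (prefix_sum f k) (f k))].

Lemma mem_residue_basis k i : (i < t)%N ->
  nat_of_bool (k \in residue_basis i) = count_res t (iota (prefix_sum f k) (f k)) i.
Proof.
move=> lt_it; rewrite inE has_count.
have := count_res_short t_gt0 (prefix_sum f k) lt_it (f_le_t k).
by rewrite /count_res; case: count => [|[]].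
Qed.

Lemma prefix_card_residue_basis m i : (i < t)%N ->
  prefix_card (residue_basis i) m = count_res t (iota 0 (prefix_sum f m)) i.
Proof.
move=> lt_it; elim: m => [|m IHm]; first by rewrite /prefix_card !prefix_sum0.
case: (ltnP m n) => [lt_mn | le_nm]; last first.
  by rewrite /prefix_card !prefix_sumS_geq.
have -> : m = Ordinal lt_mn by [].
rewrite /prefix_card !prefix_sumS -/(prefix_card _ _) IHm iotaD.
by rewrite count_res_cat -mem_residue_basis.
Qed.

Lemma residue_basis_schubert i : (i < t)%N -> schubert_basis S (residue_basis i).
Proof.
move=> lt_it; apply/gale_le_prefix_card; split.
  rewrite -(prefix_card_total (residue_basis i) (leqnn n)).
  by rewrite prefix_card_residue_basis // prefix_sum_n count_res_iota_mul.
move=> m; rewrite prefix_card_residue_basis //.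
rewrite -{1}(count_res_iota_mul t_gt0 (prefix_card S m) lt_it).
by rewrite -(subnKC (prefix_sum_geq m)) iotaD count_res_cat leq_addr.
Qed.

Lemma sum_residue_basis k : (\sum_(i < t) nat_of_bool (k \in residue_basis i))%N = f k.
Proof.
rewrite -[RHS](size_iota (prefix_sum f k)) -(sum_count_res t_gt0).
by apply: eq_bigr => i _; rewrite mem_residue_basis.
Qed.

Local Open Scope ring_scope.

Lemma prefix_sum_dilated_schubert (R : realType) :
  in_dilated_schubert_polytope R S t (fun k => Posz (f k)).
Proof.
have t_neq0 : (t%:R : R) != 0 by rewrite pnatr_eq0 -lt0n.
have basis i := residue_basis_schubert (ltn_ord i).
exists (fun B => (t%:R)^-1 * \sum_(i < t) (B == residue_basis i)%:R); split; [|split].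
- by move=> B _; rewrite mulr_ge0 ?invr_ge0 ?ler0n ?sumr_ge0.
- have sum_eq1 (i : 'I_t) : \sum_(B | schubert_basis S B) (B == residue_basis i)%:R = 1 :> R.
    rewrite -[RHS](sum_indicator_mul (fun _ => 1 : R) (basis i)).
    by apply: eq_bigr => B _; rewrite mulr1.
  rewrite -mulr_sumr exchange_big /=; under eq_bigr do rewrite sum_eq1.
  by rewrite sumr_const card_ord -mulr_natr mul1r mulVf.
- move=> k; rewrite -pmulrn; under eq_bigr do rewrite -mulrA.
  rewrite -mulr_sumr mulrA mulfV // mul1r.
  under eq_bigr do rewrite mulr_suml.
  rewrite exchange_big /=.
  under eq_bigr => i _
    do rewrite (sum_indicator_mul (fun B : {set 'I_n} => (k \in B)%:R) (basis i)).
  by rewrite -natr_sum sum_residue_basis.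
Qed.

End PolytopeSufficient.

Lemma in_dilated_schubert_polytopeP (R : realType) n t (S : {set 'I_n}) (f : 'I_n -> nat) :
  (0 < t)%N -> (forall k, f k <= t)%N ->
  in_dilated_schubert_polytope R S t (fun k => Posz (f k)) <->
  prefix_sum f n = (t * #|S|)%N /\ forall m, (t * prefix_card S m <= prefix_sum f m)%N.
Proof.
move=> t_gt0 f_le_t; split; first exact: dilated_schubert_prefix_sum.
by case=> prefix_sum_n prefix_sum_geq; exact: prefix_sum_dilated_schubert.
Qed.

Lemma nth_indicator_blocks (a b c d k : nat) : (k < a + b + c + d)%N ->
  nth false (indicator_of [:: a; b; c; d]) k = ((a <= k < a + b) || (a + b + c <= k))%N.
Proof.
move=> lt_k; rewrite /indicator_of /= cats0 !nth_cat !size_nseq !nth_nseq.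
by repeat case: ifP => ?; lia.
Qed.

Section Blocks.
Variables (a b c d n : nat) (S : {set 'I_n}).
Hypothesis n_blocks : n = (a + b + c + d)%N.
Hypothesis mem_S : forall k : 'I_n, (k \in S) = ((a <= k < a + b) || (a + b + c <= k))%N.

Lemma prefix_card_blocks m :
  prefix_card S m = (minn m (a + b) - a + (minn m n - (a + b + c)))%N.
Proof.
elim: m => [|m IHm]; first by rewrite /prefix_card prefix_sum0 !min0n.
case: (ltnP m n) => [lt_mn | le_nm].
  have -> : m = Ordinal lt_mn by [].
  by rewrite /prefix_card prefix_sumS -/(prefix_card _ _) IHm mem_S /=; lia.
by rewrite /prefix_card prefix_sumS_geq // -/(prefix_card _ _) IHm; lia.
Qed.

Lemma card_blocks : #|S| = (b + d)%N.
Proof. by rewrite -(prefix_card_total S (leqnn n)) prefix_card_blocks; lia. Qed.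

Lemma prefix_conditions_blocks t (f : 'I_n -> nat) : (forall k, f k <= t)%N ->
  (prefix_sum f n = (t * #|S|)%N /\ forall m, (t * prefix_card S m <= prefix_sum f m)%N) <->
  (t * b <= prefix_sum f (a + b))%N /\ prefix_sum f n = (t * (b + d))%N.
Proof.
move=> f_le_t; rewrite card_blocks; split.
  case=> sum_n /(_ (a + b)%N); rewrite prefix_card_blocks.
  by have -> : (minn (a + b) (a + b) - a + (minn (a + b) n - (a + b + c)) = b)%N by lia.
case=> sum_ab sum_n; split => // m; rewrite prefix_card_blocks.
have := prefix_sum_lipschitz m (a + b) f_le_t.
have := prefix_sum_lipschitz m n f_le_t.
rewrite sum_n; nia.
Qed.

End Blocks.

Local Open Scope ring_scope.

Lemma binz_nat (m k : nat) : binz (Posz m) k = ('C(m, k))%:Z.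
Proof. by rewrite /binz ltz_nat; case: ltnP => // lt_mk; rewrite bin_small. Qed.

Lemma binz_neg (z : int) k : z < 0 -> binz z k = 0.
Proof. by move=> z_lt0; rewrite /binz ifT // (lt_le_trans z_lt0). Qed.

Lemma binz0 (z : int) : binz z 0 = (0 <= z)%R%:R.
Proof. by case: z => [m|m]; rewrite ?binz_nat ?bin0 ?binz_neg. Qed.

Lemma binzS (z : int) (k : nat) : binz (z + 1) k.+1 = binz z k.+1 + binz z k.
Proof.
case: z => [m|[|m]].
- by rewrite -PoszD !binz_nat addn1 binS PoszD addrC.
- by rewrite (_ : Negz 0 + 1 = 0) // binz_nat !binz_neg.
- by rewrite !binz_neg // NegzE.
Qed.

Lemma sum_binz_sub (K : int) (k s : nat) :
  \sum_(v < s.+1) binz (K - v%:Z) k = binz (K + 1) k.+1 - binz (K - s%:Z) k.+1.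
Proof.
elim: s => [|s IHs]; first by rewrite big_ord1 subr0 binzS addrC addKr.
rewrite big_ord_recr /= IHs.
by rewrite (_ : K - s%:Z = K - s.+1%:Z + 1) ?binzS; [ring | lia].
Qed.

Lemma sum_alt_bin_diff (T : nat -> int) (k : nat) :
  \sum_(0 <= j < k.+1) (-1) ^+ j * ('C(k, j))%:Z * (T j - T j.+1) =
  \sum_(0 <= j < k.+2) (-1) ^+ j * ('C(k.+1, j))%:Z * T j.
Proof.
pose c (j : nat) : int := (-1) ^+ j * ('C(k, j))%:Z.
have shift : \sum_(0 <= j < k.+1) c j * T j = T 0%N + \sum_(0 <= j < k.+1) c j.+1 * T j.+1.
  rewrite big_nat_recl // /c expr0 bin0 mul1r; congr (_ + _); first exact: mul1r.
  by rewrite [RHS]big_nat_recr //= bin_small // mulr0 mul0r addr0.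
have pascal : \sum_(0 <= j < k.+1) (-1) ^+ j.+1 * ('C(k.+1, j.+1))%:Z * T j.+1 =
    \sum_(0 <= j < k.+1) (c j.+1 * T j.+1 - c j * T j.+1).
  by apply: eq_bigr => j _; rewrite /c binS PoszD exprS; ring.
rewrite [RHS]big_nat_recl // expr0 bin0 !mul1r pascal sumrB addrA -shift -sumrB.
by apply: eq_bigr => j _; rewrite /c; ring.
Qed.

Section BoundedCompositions.
Variable t : nat.

Definition geom_poly : {poly int} := \sum_(v < t.+1) 'X^v.

(* The number of m-tuples in {0..t}^m with sum N. *)
Definition bounded_comp (m : nat) (N : int) : int :=
  if N is Posz k then (geom_poly ^+ m)`_k else 0.

Lemma bounded_comp_neg m (N : int) : N < 0 -> bounded_comp m N = 0.
Proof. by case: N. Qed.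

Lemma coef_geom_poly j : geom_poly`_j = (j < t.+1)%:R.
Proof.
rewrite /geom_poly coef_sum; under eq_bigr do rewrite coefXn.
case: (ltnP j t.+1) => [lt_jt | le_tj].
  rewrite (bigD1 (Ordinal lt_jt)) //= eqxx big1 ?addr0 // => i.
  by rewrite -val_eqE eq_sym /= => /negbTE ->.
rewrite big1 // => i _; case: eqP => // eq_ij.
by move: (ltn_ord i); rewrite -eq_ij ltnNge le_tj.
Qed.

Lemma bounded_compS m (N : int) :
  bounded_comp m.+1 N = \sum_(v < t.+1) bounded_comp m (N - v%:Z).
Proof.
case: N => [n|n]; last first.
  by rewrite big1 // => v _; apply: bounded_comp_neg; rewrite NegzE; lia.
rewrite /= exprSr coefMr.
rewrite (eq_bigr (fun j : 'I_n.+1 => (geom_poly ^+ m)`_(n - j) * (j < t.+1)%:R));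
  last by move=> j _; congr (_ * _); apply: coef_geom_poly.
rewrite (big_ord_widen (n + t).+1 (fun j => (geom_poly ^+ m)`_(n - j) * (j < t.+1)%:R));
  last by lia.
rewrite (big_ord_widen (n + t).+1 (fun j => bounded_comp m (n%:Z - j%:Z))); last by lia.
rewrite big_mkcond [RHS]big_mkcond /=; apply: eq_bigr => j _.
case: (ltnP j n.+1) => [lt_jn | le_nj]; case: (ltnP j t.+1) => lt_jt //=.
- by rewrite mulr1 subzn.
- by rewrite mulr0.
- by rewrite bounded_comp_neg //; lia.
Qed.

Lemma bounded_comp_sym m (N : int) : bounded_comp m N = bounded_comp m ((t * m)%:Z - N).
Proof.
elim: m N => [|m IHm] N.
  by rewrite muln0 sub0r; case: N => [[|n]|n] //=; rewrite ?expr0 ?coef1.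
rewrite !bounded_compS (reindex_inj rev_ord_inj) /=; apply: eq_bigr => v _.
rewrite IHm; congr bounded_comp.
rewrite subnS -subn1 -subzn; last by have := ltn_ord v; lia.
by rewrite -subzn ?mulnS; [lia | exact: ltnW].
Qed.

Lemma bounded_comp_swap p q (N : int) :
  bounded_comp (p + q) ((t * q)%:Z + N) = bounded_comp (q + p) ((t * p)%:Z - N).
Proof. by rewrite bounded_comp_sym addnC; congr bounded_comp; rewrite mulnDr PoszD; ring. Qed.

Definition bounded_comp_ie (m : nat) (N : int) : int :=
  \sum_(0 <= j < m.+1) (-1) ^+ j * ('C(m, j))%:Z *
     binz (N - (t.+1)%:Z * j%:Z + m%:Z - 1) m.-1.

Lemma sum_bounded_comp_ie (k : nat) (N : int) :
  \sum_(v < t.+1) bounded_comp_ie k.+1 (N - v%:Z) = bounded_comp_ie k.+2 N.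
Proof.
pose T (j : nat) := binz (N - (t.+1)%:Z * j%:Z + k.+1%:Z) k.+1.
rewrite /bounded_comp_ie exchange_big /=.
transitivity (\sum_(0 <= j < k.+2) (-1) ^+ j * ('C(k.+1, j))%:Z * (T j - T j.+1)).
  apply: eq_bigr => j _; rewrite -mulr_sumr; congr (_ * _).
  rewrite (eq_bigr (fun v : 'I_t.+1 => binz (N - (t.+1)%:Z * j%:Z + k%:Z - v%:Z) k)).
    rewrite sum_binz_sub /T; congr (binz _ _ - binz _ _).
      by rewrite -[k.+1]addn1 PoszD; ring.
    by rewrite -[j.+1]addn1 -[t.+1]addn1 -[k.+1]addn1 !PoszD; ring.
  by move=> v _; congr binz; rewrite -[k.+1]addn1 PoszD; ring.
rewrite sum_alt_bin_diff; apply: eq_bigr => j _; congr (_ * binz _ _).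
by rewrite /T -[k.+2]addn1 -[k.+1]addn1 !PoszD; ring.
Qed.

Lemma bounded_comp_ieE k (N : int) : bounded_comp k.+1 N = bounded_comp_ie k.+1 N.
Proof.
elim: k N => [|k IHk] N; last first.
  by rewrite bounded_compS -sum_bounded_comp_ie; apply: eq_bigr => v _; rewrite IHk.
rewrite /bounded_comp_ie big_nat_recr //= big_nat_recr //= big_geq // add0r !binz0.
rewrite (_ : N - (t.+1)%:Z * 0%:Z + 1%:Z - 1 = N); last by ring.
rewrite (_ : N - (t.+1)%:Z * 1%:Z + 1%:Z - 1 = N - (t.+1)%:Z); last by ring.
rewrite expr0 expr1 !bin0 bin1 mul1r mulN1r mul1r.
case: N => [n|n]; last first.
  have /negbTE-> : ~~ (0 <= Negz n - (t.+1)%:Z) by rewrite -ltNge NegzE; lia.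
  by rewrite subrr.
rewrite /= expr1 coef_geom_poly subr_ge0 lez_nat.
by case: (ltnP n t.+1); rewrite ?subr0 ?subrr.
Qed.

End BoundedCompositions.

Lemma Ffun_bounded_comp a b (c : int) t : (0 < a + b)%N ->
  Ffun a b c t = bounded_comp t (a + b) ((t * b)%:Z + c).
Proof.
move=> ab_gt0; rewrite -(prednK ab_gt0) bounded_comp_ieE prednK //.
by apply: eq_bigr => j _; congr (_ * binz _ _); rewrite -[t.+1]addn1 !PoszD PoszM; ring.
Qed.

(* Expand the product over k of sum_v Y^v (k < p) or sum_v X^v (k >= p)
   in {poly {poly int}} and compare coefficients of X^N2 Y^N1. *)
Lemma sum_ffun_split_sums t p q (N1 N2 : nat) :
  \sum_(x : {ffun 'I_(p + q) -> 'I_t.+1})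
     (((\sum_(i < p) val (x (lshift q i)))%N == N1) &&
      ((\sum_(i < q) val (x (rshift p i)))%N == N2))%:R
  = bounded_comp t p N1 * bounded_comp t q N2.
Proof.
pose F (k : 'I_(p + q)) (v : 'I_t.+1) : {poly {poly int}} :=
  if (k < p)%N then ('X^v)%:P else 'X^v.
have prodF (x : {ffun 'I_(p + q) -> 'I_t.+1}) : \prod_k F k (x k) =
    ('X^(\sum_(i < p) val (x (lshift q i))))%:P * 'X^(\sum_(i < q) val (x (rshift p i))).
  rewrite big_split_ord /F /=; congr (_ * _).
    under eq_bigr => i _ do rewrite /= ltn_ord.
    by rewrite -rmorph_prod prodrXr.
  under eq_bigr => i _ do rewrite /= ltnNge leq_addr.
  by rewrite prodrXr.
have prod_sumF : \prod_k \sum_v F k v =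
    (geom_poly t ^+ p)%:P * (map_poly polyC (geom_poly t)) ^+ q.
  rewrite big_split_ord /F /=; congr (_ * _).
    under eq_bigr => i _ do rewrite /= ltn_ord -rmorph_sum.
    by rewrite prodr_const card_ord polyC_exp.
  under eq_bigr => i _ do rewrite /= ltnNge leq_addr /=.
  rewrite prodr_const card_ord /geom_poly rmorph_sum; congr (_ ^+ _).
  by apply: eq_bigr => v _; symmetry; apply: map_polyXn.
have expand : \prod_k \sum_v F k v =
    \sum_(x : {ffun 'I_(p + q) -> 'I_t.+1}) \prod_k F k (x k) := bigA_distr_bigA F.
have := congr1 (fun P : {poly {poly int}} => P`_N2`_N1) expand.
rewrite prod_sumF -rmorphXn coefCM coef_map /= coefMC => ->.
rewrite !coef_sum; apply: eq_bigr => x _.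
rewrite prodF coefCM coefXn mulr_natr coefMn coefXn [N1 == _]eq_sym [N2 == _]eq_sym.
by case: (_ == N1); case: (_ == N2).
Qed.

Lemma card_set_sum (T : finType) (P : pred T) :
  #|[set x | P x]| = (\sum_x nat_of_bool (P x))%N.
Proof.
by rewrite -sum1_card big_mkcond; apply: eq_bigr => x _; rewrite inE; case: (P x).
Qed.

Lemma card_prefix_sums t n p q (N1 N2 : nat) : n = (p + q)%N ->
  (#|[set x : {ffun 'I_n -> 'I_t.+1} | (prefix_sum (fun k => val (x k)) p == N1)
        && (prefix_sum (fun k => val (x k)) n == N1 + N2)%N]|)%:Z
  = bounded_comp t p N1 * bounded_comp t q N2.
Proof.
move=> ->; rewrite -sum_ffun_split_sums card_set_sum -natz natr_sum.
apply: eq_bigr => x _.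
have -> : prefix_sum (fun k => val (x k)) p = (\sum_(i < p) val (x (lshift q i)))%N.
  rewrite /prefix_sum big_mkcond big_split_ord /= [X in (_ + X)%N]big1 ?addn0.
    by apply: eq_bigr => i _; rewrite ltn_ord.
  by move=> i _; rewrite ltnNge leq_addr.
rewrite prefix_sum_total // big_split_ord.
by case: eqP => [->|] //=; rewrite eqn_add2l.
Qed.

Lemma sum_nat_eq_shift (u s J : nat) :
  (\sum_(j < J) nat_of_bool (s == u + j))%N = nat_of_bool (u <= s < u + J)%N.
Proof.
elim: J => [|J IHJ]; first by rewrite big_ord0; lia.
by rewrite big_ord_recr /= IHJ; lia.
Qed.

Lemma prefix_condition_split (t a b d s T : nat) : (s <= T)%N -> (s <= t * (a + b))%N ->
  nat_of_bool ((t * b <= s) && (T == t * (b + d)))%N =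
  (\sum_(j < (t * minn a d).+1)
      nat_of_bool ((s == t * b + j) && (T == (t * b + j) + (t * d - j))))%N.
Proof.
move=> le_sT le_s_ab.
have le_j (j : 'I_(t * minn a d).+1) : (j <= t * a)%N /\ (j <= t * d)%N.
  have := ltn_ord j; rewrite ltnS => le_jm.
  by split; apply: (leq_trans le_jm); rewrite leq_mul2l ?geq_minl ?geq_minr orbT.
case: (eqVneq T (t * b + t * d)%N) => [eq_T | neq_T].
  rewrite (eq_bigr (fun j : 'I__ => nat_of_bool (s == t * b + j)%N)); last first.
    by move=> j _; have [_ le_jd] := le_j j; rewrite eq_T (_ : _ + _ == _)%N ?andbT //; lia.
  rewrite sum_nat_eq_shift eq_T mulnDr eqxx andbT minnMr; congr nat_of_bool; lia.
rewrite big1 => [|j _]; last first.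
  by have [_ le_jd] := le_j j; rewrite (_ : (T == _)%N = false) ?andbF //; apply/eqP; lia.
by rewrite mulnDr (negbTE neq_T) andbF.
Qed.

Lemma i_seq_blocks_card (R : realType) (a b c d t : nat) : (0 < t)%N ->
  i_seq R [:: a; b; c; d] t =
  #|[set x : {ffun 'I_(sumn [:: a; b; c; d]) -> 'I_t.+1} |
      (t * b <= prefix_sum (fun k => val (x k)) (a + b))%N &&
      (prefix_sum (fun k => val (x k)) (sumn [:: a; b; c; d]) == t * (b + d))%N]|.
Proof.
move=> t_gt0; apply: eq_card => x; rewrite !inE.
set n := sumn _.
have n_blocks : n = (a + b + c + d)%N by rewrite /n /=; lia.
have mem_S (k : 'I_n) : (k \in set_of_seq [:: a; b; c; d]) =
    ((a <= k < a + b) || (a + b + c <= k))%N.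
  by rewrite inE nth_indicator_blocks // -n_blocks.
have x_le_t k : (val (x k) <= t)%N by rewrite -ltnS ltn_ord.
have polytope_blocks :=
  iff_trans (in_dilated_schubert_polytopeP R _ t_gt0 x_le_t)
            (prefix_conditions_blocks n_blocks mem_S x_le_t).
apply/idP/idP => [/asboolP/polytope_blocks[-> ->] | /andP[le_b /eqP eq_n]].
  by rewrite eqxx.
exact/asboolP/polytope_blocks.
Qed.

Lemma i_seq_blocks_sum (R : realType) (a b c d t : nat) : (0 < t)%N ->
  (i_seq R [:: a; b; c; d] t)%:Z =
  \sum_(j < (t * minn a d).+1)
     bounded_comp t (a + b) (t * b + j)%N%:Z * bounded_comp t (c + d) ((t * d)%:Z - j%:Z).
Proof.
move=> t_gt0; rewrite i_seq_blocks_card // card_set_sum.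
set n := sumn _.
have n_split : n = ((a + b) + (c + d))%N by rewrite /n /=; lia.
rewrite (eq_bigr (fun x : {ffun 'I_n -> 'I_t.+1} => \sum_(j < (t * minn a d).+1)
      nat_of_bool ((prefix_sum (fun k => val (x k)) (a + b) == t * b + j) &&
        (prefix_sum (fun k => val (x k)) n == (t * b + j) + (t * d - j))))%N); last first.
  move=> x _; have x_le_t k : (val (x k) <= t)%N by rewrite -ltnS ltn_ord.
  apply: prefix_condition_split; first by apply: leq_prefix_sum; rewrite n_split leq_addr.
  by have := prefix_sum_lipschitz 0 (a + b) x_le_t; rewrite prefix_sum0 subn0.
rewrite (@exchange_big _ 0%N addn) /= -natz natr_sum; apply: eq_bigr => j _.
rewrite -card_set_sum natz (card_prefix_sums _ _ _ n_split) subzn //.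
have := ltn_ord j; rewrite ltnS => /leq_trans; apply.
by rewrite leq_mul2l geq_minr orbT.
Qed.

Theorem mainTheorem7 (R : realType) (a b c d t : nat) :
  (0 < a)%N -> (0 < b)%N -> (0 < c)%N -> (0 < d)%N -> (0 < t)%N ->
  i_seq R [:: a; b; c; d] t = i_seq R [:: d; c; b; a] t /\
  ((i_seq R [:: a; b; c; d] t)%:Z =
     \sum_(0 <= j < (t * minn a d).+1) Ffun a b j%:Z t * Ffun c d (- j%:Z) t)%R.
Proof.
move=> a_gt0 b_gt0 c_gt0 d_gt0 t_gt0; split.
  apply/eqP; rewrite -eqz_nat !i_seq_blocks_sum // minnC; apply/eqP/eq_bigr => j _.
  by rewrite !PoszD [in LHS]bounded_comp_swap [in RHS]bounded_comp_swap mulrC.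
rewrite i_seq_blocks_sum // big_mkord; apply: eq_bigr => j _.
by rewrite !Ffun_bounded_comp ?addn_gt0 ?a_gt0 ?c_gt0 // PoszD.
Qed.
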